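(* Let $\mathcal G$ be the class of all finite connected graphs, with the fixed class of epimorphisms between them being the confluent epimorphisms. Then $\mathcal G$ is a projective Fraïssé class.
   Context: A graph is a pair $A=(V(A),E(A))$ where $E(A)\subseteq V(A)^2$ is a reflexive and symmetric relation; elements of $E(A)$ are edges. A homomorphism $f\colon A\to B$ maps edges to edges; an epimorphism is a homomorphism that is surjective both on vertices and on edges; an isomorphism is an injective epimorphism. A subset $S\subseteq V(A)$ is disconnected if there are nonempty closed subsets $P,Q$ of $S$ with $P\cup Q=S$ such that $\langle a,b\rangle\notin E(A)$ whenever $a\in P$, $b\in Q$; otherwise $S$ is connected; $A$ is connected if $V(A)$ is. The component of $S$ containing $a$ is the union of all connected subsets of $S$ containing $a$. An epimorphism $f\colon A\to B$ is confluent if for every connected $Q\subseteq V(B)$ and every component $C$ of $f^{-1}(Q)$ we have $f(C)=Q$. A class $\mathcal F$ of finite graphs with a fixed class of epimorphisms between its members is a projective Fraïssé class if: (1) $\mathcal F$ contains only countably many members up to isomorphism; (2) the fixed epimorphisms are closed under composition and contain all identity maps; (3) for all $B,C\in\mathcal F$ there are $D\in\mathcal F$ and fixed epimorphisms $D\to B$, $D\to C$; (4) (projective amalgamation) for all $A,B,C\in\mathcal F$ and fixed epimorphisms $f\colon B\to A$, $g\colon C\to A$ there are $D\in\mathcal F$ and fixed epimorphisms $f_0\colon D\to B$, $g_0\colon D\to C$ with $f\circ f_0=g\circ g_0$. *)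

From mathcomp Require Import all_boot.
Set Implicit Arguments. Unset Strict Implicit. Unset Printing Implicit Defensive.

Record fgraph := FGraph {
  gV :> finType;
  gE : rel gV;
  gE_refl : reflexive gE;
  gE_sym : symmetric gE }.

Section GraphDefs.
Variables A B : fgraph.

Definition homomorphism (f : A -> B) : Prop :=
  forall x y : A, gE x y -> gE (f x) (f y).

Definition epimorphism (f : A -> B) : Prop :=
  [/\ homomorphism f,
      (forall v : B, exists x : A, f x = v) &
      (forall u v : B, gE u v -> exists x y : A, [/\ gE x y, f x = u & f y = v])].

Definition isomorphism (f : A -> B) : Prop := epimorphism f /\ injective f.

End GraphDefs.

Definition isomorphic (A B : fgraph) : Prop := exists f : A -> B, isomorphism f.

Section Connectedness.
Variable A : fgraph.

(* In a finite graph every subset is closed (discrete topology). *)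
Definition disconnectedb (S : {set A}) : bool :=
  [exists P : {set A}, [exists Q : {set A},
     [&& P :|: Q == S, P != set0, Q != set0 &
         [forall a in P, [forall b in Q, ~~ gE a b]]]]].

Definition connectedb (S : {set A}) : bool := ~~ disconnectedb S.

Definition connected_graph : Prop := connectedb [set: A].

Definition component (S : {set A}) (a : A) : {set A} :=
  [set x | [exists C : {set A}, [&& C \subset S, a \in C, connectedb C & x \in C]]].

End Connectedness.

Definition confluent (A B : fgraph) (f : A -> B) : Prop :=
  epimorphism f /\
  forall Q : {set B}, connectedb Q ->
    forall C : {set A}, (exists2 a, a \in f @^-1: Q & C = component (f @^-1: Q) a) ->
      f @: C = Q.

Definition projective_fraisse_class (P : fgraph -> Prop)
    (M : forall A B : fgraph, (A -> B) -> Prop) : Prop :=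
  [/\
      (forall (A B : fgraph) (f : A -> B), P A -> P B -> M A B f -> epimorphism f),
      (exists s : nat -> fgraph, forall A, P A -> exists n, isomorphic (s n) A),
      ((forall (A B C : fgraph) (f : A -> B) (g : B -> C),
          P A -> P B -> P C -> M A B f -> M B C g -> M A C (g \o f)) /\
       (forall A : fgraph, P A -> M A A id)),
      (forall B C : fgraph, P B -> P C ->
         exists D : fgraph, P D /\
           exists (f : D -> B) (g : D -> C), M D B f /\ M D C g) &
      (forall (A B C : fgraph) (f : B -> A) (g : C -> A),
         P A -> P B -> P C -> M B A f -> M C A g ->
         exists D : fgraph, P D /\
           exists (f0 : D -> B) (g0 : D -> C),
             [/\ M D B f0, M D C g0 & forall d : D, f (f0 d) = g (g0 d)])].

From Pilot Require Import Defs.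
From mathcomp Require Import all_boot.
Set Implicit Arguments. Unset Strict Implicit. Unset Printing Implicit Defensive.

(* Confluence is a local condition. Say that f lifts edges if for every vertex a and
   every edge (f a, v) some connected set through a inside f^-1{f a, v} has v in its
   image. Then for connected Q the image of the component of f^-1(Q) at a is closed
   under adjacency within Q, hence is all of Q; conversely confluence gives edge
   lifting by taking Q = {f a, v}. In particular edge lifting is stable under
   composition: lift along the outer map, then take a component of the preimage.
   For confluent f : B -> A and g : C -> A the projections of the pullback B x_A C lift
   edges: an edge (b, v) of B at (b, c) lifts along g at c to a connected set N, and
   each x in N is paired with b or with v according to whether g x = f b or g x = f v.
   A component of the pullback is then a connected amalgam; joint projection is
   amalgamation over the one-point graph, and there are countably many graphs up to
   isomorphism since each is coded by an adjacency matrix. *)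

Section Connectedness.
Variable G : Defs.fgraph.
Implicit Types S T X M C P : {set G}.

Definition edge_closed S X := forall u v : G, u \in X -> v \in S -> gE u v -> v \in X.

Lemma connectedP S :
  reflect (forall X, X \subset S -> X != set0 -> edge_closed S X -> S \subset X)
          (connectedb S).
Proof.
apply: (iffP negP) => [ncS X XS nX clX | cS].
  apply/subsetP => v vS; apply/negPn/negP => vX; apply: ncS.
  apply/existsP; exists X; apply/existsP; exists (S :\: X); apply/and4P; split.
  - by apply/eqP/setP => x; rewrite !inE; case xX: (x \in X); rewrite //= (subsetP XS).
  - exact: nX.
  - by apply/set0Pn; exists v; rewrite inE vX vS.
  - apply/forallP => a; apply/implyP => aX; apply/forallP => b; apply/implyP.
    by rewrite inE => /andP[bX bS]; apply: contra bX; apply: clX.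
case/existsP => P /existsP[Q /and4P[/eqP ePQ nP nQ /forallP noPQ]].
have clP : edge_closed S P.
  move=> u v uP vS uv; move: vS; rewrite -ePQ inE; case/orP => // vQ.
  by have /forallP/(_ v) := implyP (noPQ u) uP; rewrite vQ uv.
have /subsetP SP : S \subset P by apply: cS => //; rewrite -ePQ subsetUl.
have [q qQ] := set0Pn _ nQ.
have qP : q \in P by apply: SP; rewrite -ePQ inE qQ orbT.
by have /forallP/(_ q) := implyP (noPQ q) qP; rewrite qQ gE_refl.
Qed.

Lemma edge_closedI S T X : edge_closed T X -> S \subset T -> edge_closed S (X :&: S).
Proof.
move=> clX ST u v; rewrite inE => /andP[uX _] vS uv.
by rewrite inE vS (clX u v uX (subsetP ST v vS) uv).
Qed.

Lemma connected_sub_closed S T X x :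
  connectedb S -> S \subset T -> edge_closed T X -> x \in S -> x \in X -> S \subset X.
Proof.
move=> /connectedP cS ST clX xS xX.
have /subsetP SXS : S \subset X :&: S.
  apply: cS; first exact: subsetIr; last exact: edge_closedI clX ST.
  by apply/set0Pn; exists x; rewrite inE xX.
by apply/subsetP => y /SXS; rewrite inE => /andP[].
Qed.

Lemma connected_cross_edge S P x y : connectedb S -> x \in S -> x \in P ->
  y \in S -> y \notin P -> exists u w, [/\ u \in S, u \in P, w \in S, w \notin P & gE u w].
Proof.
move=> cS xS xP yS yP.
have [/existsP[u /existsP[w /and5P[]]] | none] :=
  boolP [exists u, exists w, [&& u \in S, u \in P, w \in S, w \notin P & gE u w]].
  by exists u, w.
have clSP : edge_closed S (S :&: P).
  move=> u w; rewrite !inE => /andP[uS uP] wS uw; rewrite wS; apply: contraNT none => wP.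
  by apply/existsP; exists u; apply/existsP; exists w; rewrite uS uP wS wP.
have xSP : x \in S :&: P by rewrite inE xS.
have /subsetP/(_ y yS) := connected_sub_closed cS (subxx S) clSP xS xSP.
by rewrite inE (negbTE yP) andbF.
Qed.

Lemma connected0 : connectedb (set0 : {set G}).
Proof. by apply/connectedP => X; rewrite subset0 => /eqP ->; rewrite eqxx. Qed.

Lemma connected1 (x : G) : connectedb [set x].
Proof.
apply/connectedP => X XS /set0Pn[y yX] _.
by move/subsetP/(_ y yX): XS; rewrite sub1set inE => /eqP <-.
Qed.

Lemma connectedU S1 S2 (x1 x2 : G) : connectedb S1 -> connectedb S2 ->
  x1 \in S1 -> x2 \in S2 -> gE x1 x2 -> connectedb (S1 :|: S2).
Proof.
move=> cS1 cS2 x1S1 x2S2 x12; apply/connectedP => X XS /set0Pn[y yX] clX.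
wlog yS1 : S1 S2 x1 x2 cS1 cS2 x1S1 x2S2 x12 XS clX / y \in S1.
  move=> hwlog; move/subsetP/(_ y yX): XS (XS); rewrite inE => /orP[yS1 | yS2] XS.
    exact: (hwlog S1 S2 x1 x2).
  rewrite setUC in XS clX *.
  by apply: (hwlog S2 S1 x2 x1) => //; rewrite gE_sym.
have /subsetP S1X := connected_sub_closed cS1 (subsetUl S1 S2) clX yS1 yX.
have x2X : x2 \in X by apply: clX (S1X _ x1S1) _ x12; rewrite inE x2S2 orbT.
by rewrite subUset (connected_sub_closed cS2 (subsetUr S1 S2) clX x2S2 x2X) andbT;
  apply/subsetP.
Qed.

Lemma connected2 (u v : G) : gE u v -> connectedb [set u; v].
Proof. exact: connectedU (connected1 u) (connected1 v) (set11 u) (set11 v). Qed.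

Lemma component_sub S (a : G) : component S a \subset S.
Proof. by apply/subsetP => x; rewrite inE => /existsP[C /and4P[/subsetP CS _ _ /CS]]. Qed.

Lemma sub_component S (a : G) C :
  C \subset S -> a \in C -> connectedb C -> C \subset component S a.
Proof.
move=> CS aC cC; apply/subsetP => x xC.
by rewrite inE; apply/existsP; exists C; rewrite CS aC cC.
Qed.

Lemma mem_component S (a : G) : a \in S -> a \in component S a.
Proof.
by move=> aS; rewrite (subsetP (sub_component _ (set11 a) (connected1 a))) ?sub1set ?set11.
Qed.

Lemma component_connected S (a : G) : connectedb (component S a).
Proof.
apply/connectedP => X XS /set0Pn[x xX] clX.
have CX C y : C \subset S -> a \in C -> connectedb C -> y \in C -> y \in X -> C \subset X.
  by move=> CS aC cC; apply: connected_sub_closed cC (sub_component CS aC cC) clX.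
move/subsetP/(_ x xX): XS; rewrite inE => /existsP[C0 /and4P[C0S aC0 cC0 xC0]].
have aX : a \in X := subsetP (CX C0 x C0S aC0 cC0 xC0 xX) a aC0.
apply/subsetP => y; rewrite inE => /existsP[C /and4P[CS aC cC yC]].
exact: subsetP (CX C a CS aC cC aC aX) y yC.
Qed.

Lemma component_closed S (a : G) : edge_closed S (component S a).
Proof.
move=> u v; rewrite [u \in _]inE => /existsP[C /and4P[CS aC cC uC]] vS uv.
have cCv := connectedU cC (connected1 v) uC (set11 v) uv.
have aCv : a \in C :|: [set v] by rewrite inE aC.
rewrite (subsetP (sub_component _ aCv cCv)) ?subUset ?CS ?sub1set //.
by rewrite inE set11 orbT.
Qed.

End Connectedness.

Lemma connected_image (G H : Defs.fgraph) (f : G -> H) (S : {set G}) : connectedb S ->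
  {in S &, forall u v, gE u v -> gE (f u) (f v)} -> connectedb (f @: S).
Proof.
move=> cS hf; apply/connectedP => X XS /set0Pn[_ /[dup] /(subsetP XS)/imsetP[s sS ->] fsX] clX.
have clSX : edge_closed S (S :&: f @^-1: X).
  move=> u v; rewrite !inE => /andP[uS fuX] vS uv; rewrite vS.
  exact: clX fuX (imset_f f vS) (hf u v uS vS uv).
have sSX : s \in S :&: f @^-1: X by rewrite !inE sS.
have /subsetP SX := connected_sub_closed cS (subxx S) clSX sS sSX.
by apply/subsetP => _ /imsetP[x /SX xSX ->]; move: xSX; rewrite !inE => /andP[].
Qed.

Section EdgeLifting.
Variables (A B : Defs.fgraph) (f : A -> B).

Definition lifts_edges := forall (a : A) (v : B), gE (f a) v ->
  exists2 M : {set A}, connectedb M &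
    [/\ a \in M, M \subset f @^-1: [set f a; v] & v \in f @: M].

Lemma lifts_edges_onto_component : lifts_edges ->
  forall Q : {set B}, connectedb Q -> forall a, f a \in Q ->
    f @: component (f @^-1: Q) a = Q.
Proof.
move=> lf Q cQ a faQ; pose K := component (f @^-1: Q) a.
have KQ : f @: K \subset Q.
  apply/subsetP => _ /imsetP[x xK ->].
  by have /subsetP/(_ x xK) := component_sub (f @^-1: Q) a; rewrite inE.
apply/eqP; rewrite eqEsubset KQ; apply: (connectedP _ cQ _ KQ).
  by apply/set0Pn; exists (f a); rewrite imset_f // mem_component ?inE.
move=> _ v /imsetP[t tK ->] vQ tv.
have [M cM [tM Msub vM]] := lf t v tv.
have MK : M \subset K.
  apply: (connected_sub_closed cM _ (@component_closed _ _ a) tM tK).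
  apply: subset_trans Msub _; apply/subsetP => x; rewrite !inE.
  by case/orP => /eqP ->; first exact: subsetP KQ _ (imset_f f tK).
exact: subsetP (imsetS f MK) v vM.
Qed.

Lemma confluent_lifts_edges : confluent f -> lifts_edges.
Proof.
case=> _ onto a v av; set Q := [set f a; v].
exists (component (f @^-1: Q) a); first exact: component_connected.
split; [by rewrite mem_component // inE set21 | exact: component_sub |].
rewrite (onto Q (connected2 av)) ?set22 //.
by exists a; rewrite // inE set21.
Qed.

Lemma lifts_edges_confluent : 0 < #|A| -> connected_graph B ->
  homomorphism f -> lifts_edges -> confluent f.
Proof.
move=> /card_gt0P[a0 _] cB hf lf.
have onto := lifts_edges_onto_component lf.
have surj v : exists x, f x = v.
  have /setP/(_ v) := onto _ cB a0 (in_setT _).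
  by rewrite in_setT => /imsetP[x _ ->]; exists x.
split; last by move=> Q cQ C [a]; rewrite inE => faQ ->; apply: onto.
split=> // u v; have [a <-] := surj u => uv.
have [-> | nv] := eqVneq v (f a); first by exists a, a; rewrite gE_refl.
have [M cM [aM /subsetP Msub /imsetP[a' a'M fa']]] := lf a v uv.
have [||x [y [xM fx yM fy xy]]] :=
  connected_cross_edge (P := f @^-1: [set f a]) cM aM _ a'M.
- by rewrite !inE.
- by rewrite !inE -fa'.
exists x, y; split => //; first by move: fx; rewrite !inE => /eqP.
by move: (Msub y yM) fy; rewrite !inE => /orP[->|/eqP].
Qed.

End EdgeLifting.

Lemma lifts_edges_comp (A B C : Defs.fgraph) (f : A -> B) (g : B -> C) :
  lifts_edges f -> lifts_edges g -> lifts_edges (g \o f).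
Proof.
move=> lf lg a v /(lg (f a))[N cN [faN /subsetP NR /imsetP[w wN vw]]].
have fM := lifts_edges_onto_component lf cN faN.
exists (component (f @^-1: N) a); first exact: component_connected.
split; first by rewrite mem_component // inE.
- apply/subsetP => x xM; have /NR : f x \in N by rewrite -fM imset_f.
  by rewrite !inE.
- by rewrite imset_comp fM vw imset_f.
Qed.

Lemma lifts_edges_can (A B : Defs.fgraph) (f : A -> B) (g : B -> A) :
  homomorphism g -> cancel f g -> cancel g f -> lifts_edges f.
Proof.
move=> hg fK gK a v av; exists [set a; g v].
  by apply: connected2; rewrite -{1}(fK a); apply: hg.
split; first exact: set21.
  by apply/subsetP => x; rewrite !inE => /orP[] /eqP ->; rewrite ?gK eqxx ?orbT.
by rewrite -{1}[v]gK imset_f ?set22.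
Qed.

Definition point_graph : Defs.fgraph :=
  @FGraph unit [rel _ _ | true] (fun _ => isT) (fun _ _ => erefl).

Lemma point_graph_connected : 0 < #|point_graph| /\ connected_graph point_graph.
Proof.
split; first by apply/card_gt0P; exists tt.
by apply/connectedP => X _ /set0Pn[[] xX] _; apply/subsetP => -[].
Qed.

Lemma confluent_to_point (A : Defs.fgraph) :
  0 < #|A| -> confluent (fun _ : A => tt : point_graph).
Proof.
case: point_graph_connected => _ cP A0; apply: lifts_edges_confluent => // a [] _.
exists [set a]; first exact: connected1.
split; [exact: set11 | by rewrite sub1set !inE eqxx | by rewrite imset_set1 set11].
Qed.

Section Induced.
Variables (G : Defs.fgraph) (S : {set G}).

Definition induced : Defs.fgraph :=
  @FGraph {x : G | x \in S} (fun x y => gE (val x) (val y))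
    (fun x => gE_refl (val x)) (fun x y => gE_sym (val x) (val y)).

Lemma val_induced (M : {set G}) : M \subset S ->
  val @: [set x : induced | val x \in M] = M.
Proof.
move=> /subsetP MS; apply/setP => y; apply/imsetP/idP => [[x] | yM].
  by rewrite inE => xM ->.
by exists (exist _ y (MS y yM)); rewrite ?inE.
Qed.

Lemma connected_induced (T : {set induced}) : connectedb (val @: T) = connectedb T.
Proof.
apply/idP/idP => [cT | cT]; last by apply: connected_image cT _ => x y _ _.
have [-> | [t0 _]] := set_0Vmem T; first exact: connected0.
have -> : T = insubd t0 @: (val @: T).
  by rewrite -imset_comp (eq_imset _ (valKd t0)) imset_id.
by apply: connected_image cT _ => _ _ /imsetP[x _ ->] /imsetP[y _ ->]; rewrite /= !valKd.
Qed.

Lemma lifts_edges_induced (B : Defs.fgraph) (f : G -> B) :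
  edge_closed [set: G] S -> lifts_edges f -> lifts_edges (fun x : induced => f (val x)).
Proof.
move=> clS lf t v /(lf (val t))[M cM [tM Msub /imsetP[m mM vm]]].
have /subsetP MS := connected_sub_closed cM (subsetT M) clS tM (valP t).
exists [set x : induced | val x \in M].
  by rewrite -connected_induced val_induced //; apply/subsetP.
split; first by rewrite inE.
  by apply/subsetP => x; rewrite inE => /(subsetP Msub); rewrite !inE.
by apply/imsetP; exists (exist _ m (MS m mM)); rewrite ?inE.
Qed.

End Induced.

Section Pullback.
Variables (A B C : Defs.fgraph) (f : B -> A) (g : C -> A).

Definition pullback_edge (x y : {x : B * C | f x.1 == g x.2}) :=
  gE (val x).1 (val y).1 && gE (val x).2 (val y).2.

Lemma pullback_edge_refl : reflexive pullback_edge.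
Proof. by move=> x; rewrite /pullback_edge !gE_refl. Qed.

Lemma pullback_edge_sym : symmetric pullback_edge.
Proof. by move=> x y; rewrite /pullback_edge gE_sym [gE (val x).2 _]gE_sym. Qed.

Definition pullback : Defs.fgraph := FGraph pullback_edge_refl pullback_edge_sym.

Definition pb1 (x : pullback) : B := (val x).1.
Definition pb2 (x : pullback) : C := (val x).2.

Lemma pb1_hom : homomorphism pb1. Proof. by move=> x y /andP[]. Qed.
Lemma pb2_hom : homomorphism pb2. Proof. by move=> x y /andP[]. Qed.

Lemma pb_commute (x : pullback) : f (pb1 x) = g (pb2 x).
Proof. exact/eqP/(valP x). Qed.

Lemma pullback_edgeE (x y : pullback) :
  gE x y = gE (pb1 x) (pb1 y) && gE (pb2 x) (pb2 y).
Proof. by []. Qed.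

Lemma lifts_edges_pb1 : homomorphism f -> lifts_edges g -> lifts_edges pb1.
Proof.
move=> hf lg t v tv; have := hf _ _ tv; rewrite pb_commute.
case/(lg (pb2 t))=> N cN [tN /subsetP NR /imsetP[c' c'N gc']].
pose h x : pullback := insubd t (if g x == f v then v else pb1 t, x).
have hval x : x \in N -> val (h x) = (if g x == f v then v else pb1 t, x).
  move=> xN; apply: insubdK; rewrite -topredE /=.
  case: ifP => [/eqP -> // | /negbT gxv].
  by move: (NR x xN); rewrite !inE (negbTE gxv) orbF pb_commute eq_sym.
have h1 x : x \in N -> pb1 (h x) \in [set pb1 t; v].
  by move=> xN; rewrite /pb1 hval //=; case: ifP; rewrite !inE eqxx ?orbT.
have h2 x : x \in N -> pb2 (h x) = x by move=> xN; rewrite /pb2 hval.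
have clique : {in [set pb1 t; v] &, forall u w, gE u w}.
  by move=> u w; rewrite !inE => /orP[]/eqP-> /orP[]/eqP->; rewrite ?gE_refl // gE_sym.
have hE : {in N &, forall x y, gE x y -> gE (h x) (h y)}.
  by move=> x y xN yN xy; rewrite pullback_edgeE !h2 // xy clique ?h1.
have th : gE t (h (pb2 t)) by rewrite pullback_edgeE h2 // gE_refl clique ?h1 ?set21.
exists (t |: h @: N).
  exact: connectedU (connected1 t) (connected_image cN hE) (set11 t) (imset_f h tN) th.
split; first by rewrite setU11.
  apply/subsetP => x; rewrite !inE => /orP[/eqP -> | /imsetP[y yN ->]].
    by rewrite eqxx.
  by rewrite -in_set2 h1.
apply/imsetP; exists (h c'); first by rewrite inE imset_f ?orbT.
by rewrite /pb1 hval //= -gc' eqxx.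
Qed.

End Pullback.

Definition pb_swap (A B C : Defs.fgraph) (f : B -> A) (g : C -> A)
    (x : pullback f g) : pullback g f :=
  exist _ (pb2 x, pb1 x) (etrans (eq_sym _ _) (valP x)).

Lemma pb_swapK (A B C : Defs.fgraph) (f : B -> A) (g : C -> A) :
  cancel (@pb_swap A B C f g) (@pb_swap A C B g f).
Proof. by case=> -[b c] p; apply: val_inj. Qed.

Lemma pb_swap_hom (A B C : Defs.fgraph) (f : B -> A) (g : C -> A) :
  homomorphism (@pb_swap A B C f g).
Proof. by move=> x y; rewrite !pullback_edgeE andbC. Qed.

Lemma lifts_edges_pb2 (A B C : Defs.fgraph) (f : B -> A) (g : C -> A) :
  homomorphism g -> lifts_edges f -> lifts_edges (@pb2 A B C f g).
Proof.
move=> hg lf; have -> : @pb2 A B C f g = @pb1 A C B g f \o @pb_swap A B C f g by [].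
apply: lifts_edges_comp; last exact: lifts_edges_pb1.
exact: lifts_edges_can (@pb_swap_hom A C B g f) (@pb_swapK A B C f g) (@pb_swapK A C B g f).
Qed.

Lemma amalgamation (A B C : Defs.fgraph) (f : B -> A) (g : C -> A) :
  0 < #|B| /\ connected_graph B -> connected_graph C -> confluent f -> confluent g ->
  exists D : Defs.fgraph, (0 < #|D| /\ connected_graph D) /\
    exists (f0 : D -> B) (g0 : D -> C),
      [/\ confluent f0, confluent g0 & forall d : D, f (f0 d) = g (g0 d)].
Proof.
move=> [/card_gt0P[b0 _] cB] cC cf cg.
have [[hf _ _] _] := cf; have [[hg surj_g _] _] := cg.
have [c0 gc0] := surj_g (f b0).
pose x0 : pullback f g := exist _ (b0, c0) (introT eqP (esym gc0)).
pose K := component [set: pullback f g] x0.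
have x0K : x0 \in K by rewrite mem_component ?inE.
have D0 : 0 < #|induced K| by apply/card_gt0P; exists (exist _ x0 x0K).
have clK : edge_closed [set: pullback f g] K := @component_closed _ _ x0.
exists (induced K); split.
  split=> //; rewrite /connected_graph -connected_induced.
  have -> : [set: induced K] = [set x | val x \in K].
    by apply/setP => x; rewrite in_setT in_set (valP x).
  by rewrite val_induced ?component_connected.
exists (fun d => pb1 (val d)), (fun d => pb2 (val d)); split.
- apply: lifts_edges_confluent => //; first by move=> x y /pb1_hom.
  exact/(lifts_edges_induced clK)/(lifts_edges_pb1 hf)/confluent_lifts_edges.
- apply: lifts_edges_confluent => //; first by move=> x y /pb2_hom.
  exact/(lifts_edges_induced clK)/(lifts_edges_pb2 hg)/confluent_lifts_edges.
- by move=> d; apply: pb_commute.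
Qed.

Definition graph_code := {n : nat & {ffun 'I_n * 'I_n -> bool}}.

Definition code_edge (c : graph_code) : rel 'I_(tag c) :=
  fun x y => [|| x == y, tagged c (x, y) | tagged c (y, x)].

Lemma code_edge_refl (c : graph_code) : reflexive (@code_edge c).
Proof. by move=> x; rewrite /code_edge eqxx. Qed.

Lemma code_edge_sym (c : graph_code) : symmetric (@code_edge c).
Proof. by move=> x y; rewrite /code_edge eq_sym; congr (_ || _); rewrite orbC. Qed.

Definition code_graph (c : graph_code) : Defs.fgraph :=
  FGraph (@code_edge_refl c) (@code_edge_sym c).

Definition nth_graph (k : nat) : Defs.fgraph :=
  if unpickle k is Some c then code_graph c else point_graph.

Lemma nth_graph_iso (A : Defs.fgraph) : exists k, isomorphic (nth_graph k) A.
Proof.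
pose r := [ffun p : 'I_#|A| * 'I_#|A| => gE (enum_val p.1) (enum_val p.2)].
exists (pickle (Tagged (fun n => {ffun 'I_n * 'I_n -> bool}) r)).
rewrite /nth_graph pickleK; exists (@enum_val A predT); split; last exact: enum_val_inj.
split.
- move=> x y; rewrite /= /code_edge /= !ffunE /= => /or3P[/eqP -> | // | ].
    exact: gE_refl.
  by rewrite gE_sym.
- by move=> v; exists (enum_rank v); rewrite enum_rankK.
- move=> u v uv; exists (enum_rank u), (enum_rank v).
  by rewrite !enum_rankK /= /code_edge /= ffunE /= !enum_rankK uv orbT.
Qed.

Theorem mainTheorem1 :
  projective_fraisse_class (fun G => 0 < #|G| /\ connected_graph G) confluent.
Proof.
split.
- by move=> A B f _ _ [].
- by exists nth_graph => A _; apply: nth_graph_iso.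
- split=> [A B C f g [A0 _] _ [_ cC] cf cg | A [A0 cA]].
    have [[hf _ _] _] := cf; have [[hg _ _] _] := cg.
    apply: lifts_edges_confluent => //; first by move=> x y /hf /hg.
    exact: lifts_edges_comp (confluent_lifts_edges cf) (confluent_lifts_edges cg).
  apply: lifts_edges_confluent => //.
  by apply: (@lifts_edges_can _ _ id id) => // x y.
- move=> B C [B0 cB] [C0 cC].
  have [D [PD [f0 [g0 [cf0 cg0 _]]]]] :=
    amalgamation (conj B0 cB) cC (confluent_to_point B0) (confluent_to_point C0).
  by exists D; split=> //; exists f0, g0.
- by move=> A B C f g _ PB [_ cC]; apply: amalgamation.
Qed.
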